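(* Let $SS=(S(a_i))_{i\ge1}$ be a system of grids without multiple zeroes, let $n\ge1$, $q\ge0$ be integers, and let $\alpha=\sum_{i=1}^n 1/a_i$ be the density of zeroes of an $n$-filling of the first $n$ grids having no zero of multiplicity greater than one; assume $0<\alpha<1$. Then $$msr_n(q)\;<\;\frac{n+q}{1-\alpha}+1,$$ and this majorant is unimprovable.
   Context: A grid $S(a)$ of module $a\in\mathbb N$, $a\ge1$, with shift $k\in\mathbb Z$ is the sequence $(l_j)_{j\in\mathbb Z}$ with $l_j=0$ iff $j\equiv k\pmod a$ and $l_j=1$ otherwise. The product of grids is the elementwise logical AND. An $n$-filling with modules $a_1,\dots,a_n$ is a product of grids $S(a_1),\dots,S(a_n)$ (arbitrary shifts) such that omitting any one grid changes the product. A system of grids is an infinite sequence of grids with nondecreasing modules such that for each $n$ the first $n$ grids form an $n$-filling. A zero of a filling at position $j$ has multiplicity $k$ if exactly $k$ of the generating grids have a zero at $j$. A system is without multiple zeroes if for every $n$ there is an $n$-filling of its first $n$ grids in which every zero has multiplicity $1$. A $q$-series is a segment between positions $i<k$ with $l_i=l_k=1$ and exactly $q$ ones strictly between them; its length is $k-i$. $msr_n(q)$ is the supremum over all $n$-fillings with modules $a_1,\dots,a_n$ (all shifts) of the largest length of a $q$-series. *)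

From HB Require Import structures.
From mathcomp Require Import all_boot all_order all_algebra.
From mathcomp Require Import all_classical all_reals ereal.
Set Implicit Arguments. Unset Strict Implicit. Unset Printing Implicit Defensive.
Import Order.TTheory GRing.Theory Num.Theory.
Local Open Scope ring_scope.
Local Open Scope classical_set_scope.

(* Grids are indexed from 0: grid number i+1 of the paper is index i.
   [a : nat -> nat] gives the modules, [k : nat -> int] the shifts. *)
Definition grid_zero (m : nat) (s j : int) : bool := (j == s %[mod m%:Z])%Z.

Definition prodg (n : nat) (a : nat -> nat) (k : nat -> int) (j : int) : bool :=
  [forall i : 'I_n, ~~ grid_zero (a i) (k i) j].

Definition prodg_omit (n : nat) (a : nat -> nat) (k : nat -> int) (i : 'I_n) (j : int) : bool :=
  [forall m : 'I_n, (m != i) ==> ~~ grid_zero (a m) (k m) j].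

Definition is_filling (n : nat) (a : nat -> nat) (k : nat -> int) : Prop :=
  forall i : 'I_n, exists j : int, prodg_omit a k i j != prodg n a k j.

Definition multiplicity (n : nat) (a : nat -> nat) (k : nat -> int) (j : int) : nat :=
  #|[set i : 'I_n | grid_zero (a i) (k i) j]|.

Definition grid_system (a : nat -> nat) (k : nat -> int) : Prop :=
  [/\ forall i, (1 <= a i)%N,
      forall i, (a i <= a i.+1)%N &
      forall n, is_filling n a k].

Definition no_multiple_zeroes (a : nat -> nat) : Prop :=
  forall n : nat, exists k : nat -> int,
    is_filling n a k /\
    forall j : int, ~~ prodg n a k j -> multiplicity n a k j = 1%N.

Definition is_qseries (l : int -> bool) (q : nat) (i : int) (len : nat) : Prop :=
  [/\ (0 < len)%N, l i, l (i + len%:Z) &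
      count (fun t : nat => l (i + t%:Z)) (iota 1 len.-1) = q].

Definition msr (R : realType) (n : nat) (a : nat -> nat) (q : nat) : \bar R :=
  ereal_sup [set (len%:R)%:E | len in
    [set len : nat | exists k : nat -> int, is_filling n a k /\
                     exists i : int, is_qseries (prodg n a k) q i len]].

Definition alpha (R : realType) (n : nat) (a : nat -> nat) : R :=
  \sum_(i < n) ((a i)%:R)^-1.

Definition msr_bound (R : realType) (n : nat) (a : nat -> nat) (q : nat) : R :=
  (n + q)%:R / (1 - alpha R n a) + 1.

From HB Require Import structures.
From mathcomp Require Import all_boot all_order all_algebra.
From mathcomp Require Import all_classical all_reals ereal.
From mathcomp Require Import zify ring lra.
Import Order.TTheory GRing.Theory Num.Theory.

(* Upper bound: the L-1 interior positions of a q-series of length L contain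
   q ones, so L-1-q of them are zeroes of the product, each a zero of some
   grid.  Zeroes of S(a) are a apart, so S(a) has at most (L-2)/a + 1 of them
   there; summing, L-1-q <= (L-2) alpha + n, i.e.
   (L-1)(1-alpha) <= n+q-alpha < n+q.
   Sharpness: the modules 2^(c+1), ..., 2^(c+n), ... with shifts
   2^c, ..., 2^(c+n-1), ... have pairwise disjoint zero sets, hence form a
   system without multiple zeroes, and alpha <= n/c.  Shifting the first n
   grids to put their zeroes at 1, ..., n gives (for c > n+q+1) a q-series
   from 0 to n+q+1, and (n+q)/(1-alpha) + 1 tends to n+q+1 as c grows. *)

Local Open Scope nat_scope.

Section SeparatedCount.

Variables (P : pred nat) (d : nat).
Hypothesis P_separated : forall t u, P t -> 0 < u < d -> ~~ P (t + u).

Lemma count_separated_gap k r : P k -> r < d -> count P (iota k.+1 r) = 0.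
Proof.
move=> Pk rd; rewrite (@eq_in_count _ _ pred0) ?count_pred0 // => t.
rewrite mem_iota => t_range /=; apply/negbTE.
have -> : t = k + (t - k) by lia.
by apply: P_separated => //; lia.
Qed.

Lemma count_separated_iota m k : 0 < d -> d * count P (iota k m) <= m + d - 1.
Proof.
move=> d_gt0; elim: m {-2}m (leqnn m) k => [|N IH] m m_le k.
  by rewrite (_ : m = 0) ?muln0 //; lia.
case: m m_le => [|m] m_le /=; first by rewrite muln0.
case Pk: (P k) => /=; last by have := IH m ltac:(lia) k.+1; lia.
have [m_lt|d_le] := ltnP m d; first by rewrite count_separated_gap //; lia.
have -> : m = d.-1 + (m - d.-1) by lia.
rewrite iotaD count_cat count_separated_gap //; last by lia.
have := IH (m - d.-1) ltac:(lia) (k.+1 + d.-1); lia.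
Qed.

End SeparatedCount.

Lemma grid_zero_separated (a : nat) (s i0 : int) t u : 0 < a ->
  grid_zero a s (i0 + t%:Z) -> 0 < u < a -> ~~ grid_zero a s (i0 + (t + u)%:Z).
Proof.
move=> a_gt0; rewrite /grid_zero => /eqP zt /andP[u_gt0 u_lt]; apply/negP.
rewrite PoszD addrA -zt -[X in (_ == X %[mod _])%Z](addr0 (i0 + Posz t)%R) eqz_modDl.
rewrite modz_nat mod0z modn_small // => /eqP[u0].
by rewrite u0 in u_gt0.
Qed.

Lemma count_prodg_zero_le n a s (i0 : int) (r : seq nat) :
  count (fun t => ~~ prodg n a s (i0 + t%:Z)) r <=
  \sum_(i < n) count (fun t => grid_zero (a i) (s i) (i0 + t%:Z)) r.
Proof.
elim: r => [|x r IH] /=; first by rewrite big1.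
rewrite big_split /= leq_add //.
have [//|/=] := boolP (prodg n a s (i0 + x%:Z)).
rewrite negb_forall => /existsP[i]; rewrite negbK => zi.
by rewrite (bigD1 i) //= zi.
Qed.

Local Open Scope ring_scope.

Lemma grid_zero_countR (R : realType) (a : nat) (s i0 : int) (j m : nat) : (0 < a)%N ->
  (count (fun t => grid_zero a s (i0 + t%:Z)) (iota j m))%:R <= (m%:R - 1) / a%:R + 1 :> R.
Proof.
move=> a_gt0; set c := count _ _.
have cle : (a * c <= m + a - 1)%N.
  by apply: count_separated_iota => // t u; exact: grid_zero_separated.
have a_gtR : (0 : R) < a%:R by rewrite ltr0n.
have cleR : c%:R * a%:R <= m%:R + a%:R - 1 :> R.
  by move: cle; rewrite -(ler_nat R) natrB ?natrM ?natrD 1?mulrC //; lia.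
rewrite -(ler_pM2r a_gtR) mulrDl mulfVK ?gt_eqF //; lra.
Qed.

Lemma qseries_length_bound (R : realType) {n} {a : nat -> nat} {s q i0 L} :
  (forall i, (0 < a i)%N) -> is_qseries (prodg n a s) q i0 L ->
  (L.-1)%:R * (1 - alpha R n a) <= (n + q)%:R - alpha R n a.
Proof.
move=> a_gt0 [_ _ _ ones]; set m := L.-1 in ones *.
set z := fun i : 'I_n => count (fun t => grid_zero (a i) (s i) (i0 + t%:Z)) (iota 1 m).
have zeros : m%:R - q%:R <= \sum_(i < n) (z i)%:R :> R.
  have := count_predC (fun t => prodg n a s (i0 + t%:Z)) (iota 1 m).
  rewrite size_iota ones -natr_sum => <-.
  by rewrite natrD addrAC subrr add0r ler_nat count_prodg_zero_le.
have grids : \sum_(i < n) (z i)%:R <= (m%:R - 1) * alpha R n a + n%:R :> R.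
  have grid_bound (i : 'I_n) (_ : true) := grid_zero_countR R (a i) (s i) i0 1 m (a_gt0 i).
  apply: le_trans (ler_sum _ grid_bound) _.
  by rewrite big_split /= sumr_const card_ord /alpha mulr_sumr.
rewrite natrD; lra.
Qed.

Lemma msr_lt_bound (R : realType) n (a : nat -> nat) q :
  (forall i, (0 < a i)%N) -> 0 < alpha R n a < 1 ->
  (msr R n a q < (msr_bound R n a q)%:E)%E.
Proof.
move=> a_gt0 /andP[alpha_gt0 alpha_lt1].
have gap_gt0 : 0 < 1 - alpha R n a by rewrite subr_gt0.
apply: (@le_lt_trans _ _ (((n + q)%:R - alpha R n a) / (1 - alpha R n a) + 1)%:E).
  apply: ge_ereal_sup => _ [L [s [_ [i0 series]]] <-]; rewrite lee_fin.
  have bound := qseries_length_bound R a_gt0 series.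
  case: series => L_gt0 _ _ _.
  by rewrite -(prednK L_gt0) -addn1 natrD lerD2r ler_pdivlMr.
by rewrite lte_fin /msr_bound ltrD2r ltr_pM2r ?invr_gt0 // gtrBl.
Qed.

Lemma grid_zero_small (a t u : nat) : (t < a)%N -> (u < a)%N ->
  grid_zero a u t = (t == u).
Proof. by move=> t_lt u_lt; rewrite /grid_zero !modz_nat !modn_small. Qed.

Lemma filling_of_private_zeros n (a : nat -> nat) (s : nat -> int) :
  (forall i : 'I_n, exists j, grid_zero (a i) (s i) j /\
     forall m : 'I_n, m != i -> ~~ grid_zero (a m) (s m) j) ->
  is_filling n a s.
Proof.
move=> private i; have [j [zi others]] := private i; exists j.
have -> : prodg n a s j = false.
  by apply/negbTE; rewrite negb_forall; apply/existsP; exists i; rewrite negbK.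
suff -> : prodg_omit a s i j by [].
by apply/forallP => m; apply/implyP; exact: others.
Qed.

(* The zeroes of S(2^(e+1)) with shift 2^e are the integers of 2-adic valuation e. *)
Lemma dyadic_grid_zero_inj {e f} {j : int} :
  grid_zero (2 ^ e.+1) (Posz (2 ^ e)) j -> grid_zero (2 ^ f.+1) (Posz (2 ^ f)) j -> e = f.
Proof.
wlog ef : e f / (e <= f)%N => [hwlog|].
  by have [/hwlog//|/ltnW/hwlog fe ze zf] := leqP e f; rewrite (fe zf ze).
move: ef; rewrite leq_eqVlt => /orP[/eqP//|ef].
rewrite /grid_zero !eqz_mod_dvd => ze zf.
have d1 : (Posz (2 ^ e.+1) %| Posz (2 ^ f.+1))%Z.
  by rewrite dvdzE; apply: dvdn_exp2l; exact: ltnW.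
have d2 : (Posz (2 ^ e.+1) %| Posz (2 ^ f))%Z by rewrite dvdzE; apply: dvdn_exp2l.
have zj : (Posz (2 ^ e.+1) %| j)%Z.
  by rewrite -(subrK (Posz (2 ^ f)) j); apply: rpredD => //; exact: dvdz_trans d1 zf.
by have := rpredB zj ze; rewrite subKr dvdzE dvdn_Pexp2l // ltnn.
Qed.

Definition dyadic_module (c i : nat) : nat := 2 ^ (i + c).+1.
Definition dyadic_shift (c i : nat) : int := Posz (2 ^ (i + c)).
Definition consecutive_shift (i : nat) : int := Posz i.+1.

Section DyadicModules.

Variable c : nat.
Local Notation a := (dyadic_module c).

Lemma dyadic_module_gt i : (c < a i)%N.
Proof.
apply: leq_trans (ltn_expl c (isT : (1 < 2)%N)) _.
by rewrite /dyadic_module leq_pexp2l //; lia.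
Qed.

Lemma dyadic_grid_zero_eq {m i j} : grid_zero (a m) (dyadic_shift c m) j ->
  grid_zero (a i) (dyadic_shift c i) j -> m = i.
Proof. by move=> zm zi; have := dyadic_grid_zero_inj zm zi; lia. Qed.

Lemma dyadic_filling n : is_filling n a (dyadic_shift c).
Proof.
apply: filling_of_private_zeros => i; exists (dyadic_shift c i).
have zi : grid_zero (a i) (dyadic_shift c i) (dyadic_shift c i) by rewrite /grid_zero.
split=> // m; apply: contra => zm; apply/eqP/val_inj; exact: dyadic_grid_zero_eq zm zi.
Qed.

Lemma dyadic_grid_system : grid_system a (dyadic_shift c).
Proof.
split=> [i|i|]; last exact: dyadic_filling.
  by rewrite expn_gt0.
by rewrite leq_pexp2l //; lia.
Qed.

Lemma dyadic_no_multiple_zeroes : no_multiple_zeroes a.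
Proof.
move=> n; exists (dyadic_shift c); split=> [|j]; first exact: dyadic_filling.
rewrite /prodg negb_forall => /existsP[i]; rewrite negbK => zi.
rewrite /multiplicity -(cards1 i); apply: eq_card => m; rewrite !inE.
apply/idP/eqP => [|->]; rewrite inE //= => zm.
by apply: val_inj; exact: dyadic_grid_zero_eq zm zi.
Qed.

Lemma alpha_dyadic_mul_le (R : realType) n : alpha R n a * c%:R <= n%:R.
Proof.
have -> : n%:R = \sum_(i < n) 1 :> R by rewrite sumr_const card_ord.
rewrite /alpha mulr_suml.
apply: ler_sum => i _; have a_gt0 : (0 : R) < (a i)%:R by rewrite ltr0n expn_gt0.
by rewrite ler_pdivrMl // mulr1 ler_nat ltnW // dyadic_module_gt.
Qed.

Lemma alpha_dyadic_gt0 (R : realType) n : (1 <= n)%N -> 0 < alpha R n a.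
Proof.
case: n => // n _; rewrite /alpha big_ord_recl ltr_pwDl ?invr_gt0 ?ltr0n ?expn_gt0 //.
by apply: sumr_ge0 => i _; rewrite invr_ge0.
Qed.

Variables n q : nat.
Hypothesis c_large : (n + q + 2 <= c)%N.

Lemma grid_zero_consecutive (m : 'I_n) (t : nat) : (t <= n + q + 1)%N ->
  grid_zero (a m) (consecutive_shift m) t = (t == m.+1).
Proof.
move=> t_le; have := dyadic_module_gt m; have := ltn_ord m.
by move=> m_lt c_lt; rewrite grid_zero_small //; lia.
Qed.

Lemma prodg_consecutive (t : nat) : (t <= n + q + 1)%N ->
  prodg n a consecutive_shift t = (t == 0)%N || (n < t)%N.
Proof.
move=> t_le; apply/forallP/idP => [nz|t_out m].
  have [//|t_gt0 /=] := posnP t; rewrite ltnNge; apply/negP => t_le_n.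
  have t1_lt : (t.-1 < n)%N by lia.
  by have := nz (Ordinal t1_lt); rewrite grid_zero_consecutive //= => /eqP; lia.
have := ltn_ord m; rewrite grid_zero_consecutive // => m_lt; apply/eqP; lia.
Qed.

Lemma consecutive_filling : is_filling n a consecutive_shift.
Proof.
apply: filling_of_private_zeros => i; exists (consecutive_shift i); have := ltn_ord i.
split=> [|m mi]; first by rewrite grid_zero_consecutive //; lia.
rewrite grid_zero_consecutive; last by lia.
by apply: contra mi => /eqP[mi]; apply/eqP/val_inj.
Qed.

Lemma consecutive_qseries : is_qseries (prodg n a consecutive_shift) q 0 (n + q + 1).
Proof.
split; rewrite ?add0r ?prodg_consecutive ?addn1 //=; try lia.
rewrite iotaD count_cat (@eq_in_count _ _ pred0) => [|t]; last first.
  by rewrite mem_iota => t_range; rewrite add0r prodg_consecutive /=; lia.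
rewrite count_pred0 (@eq_in_count _ _ predT) ?count_predT ?size_iota // => t.
by rewrite mem_iota => t_range; rewrite add0r prodg_consecutive /=; lia.
Qed.

Lemma msr_dyadic_ge (R : realType) : (((n + q + 1)%:R)%:E <= msr R n a q)%E.
Proof.
apply: ereal_sup_ubound; exists (n + q + 1)%N => //.
exists consecutive_shift; split; first exact: consecutive_filling.
by exists 0; exact: consecutive_qseries.
Qed.

End DyadicModules.

Lemma msr_bound_subr_lt (R : realType) n (a : nat -> nat) q (eps : R) :
  0 < eps -> 0 <= alpha R n a -> ((n + q)%:R + eps) * alpha R n a < eps ->
  msr_bound R n a q - eps < (n + q + 1)%:R.
Proof.
rewrite /msr_bound natrD; set N : R := (n + q)%:R; set A := alpha R n a.
move=> eps_gt0 A_ge0 small; have N_ge0 : 0 <= N by rewrite ler0n.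
have gap_gt0 : 0 < 1 - A by nra.
suff : N / (1 - A) < N + eps by lra.
by rewrite ltr_pdivrMr //; nra.
Qed.

Lemma msr_bound_unimprovable (R : realType) (n q : nat) (eps : R) :
  (1 <= n)%N -> 0 < eps ->
  exists (a : nat -> nat) (s : nat -> int),
    [/\ grid_system a s, no_multiple_zeroes a, 0 < alpha R n a < 1 &
        ((msr_bound R n a q - eps)%:E < msr R n a q)%E].
Proof.
move=> n_ge1 eps_gt0; set N : R := (n + q)%:R.
have N_ge0 : 0 <= N by rewrite ler0n.
pose c := maxn (n + q + 2) (Num.bound ((N + eps) * n%:R / eps)).
have c_large : (n + q + 2 <= c)%N by rewrite leq_maxl.
have c_gt0 : (0 : R) < c%:R by rewrite ltr0n; lia.
have c_big : (N + eps) * n%:R < c%:R * eps.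
  rewrite -ltr_pdivrMr //; apply: lt_le_trans (archi_boundP _) _.
    by rewrite divr_ge0 ?mulr_ge0 ?ler0n //; lra.
  by rewrite ler_nat leq_maxr.
have alpha_gt0 := alpha_dyadic_gt0 c R n n_ge1.
have alpha_small : (N + eps) * alpha R n (dyadic_module c) < eps.
  have := alpha_dyadic_mul_le c R n; nra.
exists (dyadic_module c), (dyadic_shift c); split.
- exact: dyadic_grid_system.
- exact: dyadic_no_multiple_zeroes.
- by rewrite alpha_gt0 /=; nra.
apply: lt_le_trans (@msr_dyadic_ge c n q c_large R); rewrite lte_fin.
by apply: msr_bound_subr_lt => //; exact: ltW.
Qed.

Theorem theorem3 (R : realType) :
  (forall (a : nat -> nat) (s : nat -> int) (n q : nat),
      grid_system a s -> no_multiple_zeroes a -> (1 <= n)%N ->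
      0 < alpha R n a < 1 ->
      (msr R n a q < (msr_bound R n a q)%:E)%E)
  /\
  (forall (n q : nat) (eps : R), (1 <= n)%N -> 0 < eps ->
      exists (a : nat -> nat) (s : nat -> int),
        [/\ grid_system a s, no_multiple_zeroes a,
            0 < alpha R n a < 1 &
            ((msr_bound R n a q - eps)%:E < msr R n a q)%E]).
Proof.
split; last exact: msr_bound_unimprovable.
by move=> a s n q [a_gt0 _ _] _ _; exact: msr_lt_bound.
Qed.
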